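(* Assume (A1)–(A5). Then the blow-up time function $T$ satisfies $|T(x)-T(y)|\le\frac{1}{1+\varepsilon_0}|x-y|$ for all $x,y\in B_{R^*}$, where $\varepsilon_0$ is the constant in (A4).
   Context: Let $p>1$ and $\mu>0$ with $p<1+2/\mu$, and let $R^*,T^*>0$. Write $B_R=\{x\in\mathbb{R}:|x|<R\}$ and $D_\pm=\partial_t\pm\partial_x$. Consider the system $D_-\phi=2^{-p}|\phi+\psi|^p-\frac{\mu}{1+t}\frac{\phi+\psi}{2}$, $D_+\psi=2^{-p}|\phi+\psi|^p-\frac{\mu}{1+t}\frac{\phi+\psi}{2}$, $\phi(x,0)=f(x)$, $\psi(x,0)=g(x)$. Fix $\gamma_1,\gamma_2>0$ with $\gamma_1+\gamma_2>\max\big(1,(\mu p 2^p)^{1/(p-1)}\big)$ and let $T_1=\frac{1}{(p-1)\mu}\ln\Big(\frac{2^{1-p}/\mu}{2^{1-p}/\mu-(\gamma_1+\gamma_2)^{1-p}}\Big)$. Assumptions: (A1) $T_1<T^*$. (A2) $f\ge\gamma_1$, $g\ge\gamma_2$ on $B_{R^*+T^*}$. (A3) $f,g\in\mathcal{C}^4(\overline{B_{R^*+T^*}})$. (A4) There is $\varepsilon_0>0$ with $2^{-p}(\gamma_1+\gamma_2)^p-\frac{\mu}{2}(\gamma_1+\gamma_2)\ge(2+\varepsilon_0)\max_{x\in B_{R^*+T^*}}(|f'(x)|+|g'(x)|)$. (A5) There is $\varepsilon_1\neq-1$ with $2^{-p}(2p-1)\big(1+\frac{\varepsilon_1}{2(1+\varepsilon_1)}\big)\big(1-\frac{1}{2p}\big)-2^{-p+1}p-\mu>0$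 such that $2^{-p}(\gamma_1+\gamma_2)^p-\frac{\mu}{2}(\gamma_1+\gamma_2)\ge(2+\varepsilon_1)\max_{x\in B_{R^*+T^*}}(|f'(x)|+|g'(x)|)$. Let $K_{R^*,T^*}=\{(x,t):t>0,\ |x-x_0|<T^*-t\ \text{for some } x_0\in B_{R^*}\}$. Define iterates $\phi_0\equiv\gamma_1$, $\psi_0\equiv\gamma_2$ and, with $\mathcal{N}_n(x,s)=2^{-p}|\phi_n+\psi_n|^p(x,s)-\frac{\mu}{1+s}\frac{(\phi_n+\psi_n)(x,s)}{2}$, $\phi_{n+1}(x,t)=f(x+t)+\int_0^t\mathcal{N}_n(x+t-s,s)\,ds$, $\psi_{n+1}(x,t)=g(x-t)+\int_0^t\mathcal{N}_n(x-t+s,s)\,ds$. Set $\phi=\sup_n\phi_n$, $\psi=\sup_n\psi_n$, and the blow-up time $T(x)=\sup\{t\in(0,T^* ):(\phi+\psi)(x,t)<\infty\}$ for $x\in B_{R^*}$. *)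

From Stdlib Require Import Reals Lra.
From Coquelicot Require Import Coquelicot.
Open Scope R_scope.

(* a^q for a >= 0 and q > 0, with the convention 0^q = 0 *)
Definition powa (a q : R) : R := if Rlt_dec 0 a then Rpower a q else 0.

Definition Nl (p mu u s : R) : R :=
  Rpower 2 (- p) * powa (Rabs u) p - mu / (1 + s) * (u / 2).

Fixpoint iterates (p mu g1 g2 : R) (f g : R -> R) (n : nat)
  : (R -> R -> R) * (R -> R -> R) :=
  match n with
  | O => (fun _ _ => g1, fun _ _ => g2)
  | S m =>
      let '(ph, ps) := iterates p mu g1 g2 f g m in
      let N := fun x s => Nl p mu (ph x s + ps x s) s in
      (fun x t => f (x + t) + RInt (fun s => N (x + t - s) s) 0 t,
       fun x t => g (x - t) + RInt (fun s => N (x - t + s) s) 0 t)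
  end.

Definition phi_n (p mu g1 g2 : R) (f g : R -> R) (n : nat) : R -> R -> R := fst (iterates p mu g1 g2 f g n).
Definition psi_n (p mu g1 g2 : R) (f g : R -> R) (n : nat) : R -> R -> R := snd (iterates p mu g1 g2 f g n).

Definition phi_sup (p mu g1 g2 : R) (f g : R -> R) (x t : R) : Rbar :=
  Sup_seq (fun n => Finite (phi_n p mu g1 g2 f g n x t)).
Definition psi_sup (p mu g1 g2 : R) (f g : R -> R) (x t : R) : Rbar :=
  Sup_seq (fun n => Finite (psi_n p mu g1 g2 f g n x t)).

Definition blowup_time (p mu g1 g2 : R) (f g : R -> R) (Tstar x : R) : Rbar :=
  Lub_Rbar (fun t => 0 < t < Tstar /\
    Rbar_lt (Rbar_plus (phi_sup p mu g1 g2 f g x t)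
                       (psi_sup p mu g1 g2 f g x t)) p_infty).

Definition Ck_closed (k : nat) (a b : R) (f : R -> R) : Prop :=
  exists F : nat -> R -> R,
    (forall x, a <= x <= b -> F O x = f x) /\
    (forall j, (j < k)%nat -> forall x, a <= x <= b ->
       filterlim (fun h => (F j (x + h) - F j x) / h)
         (within (fun h => h <> 0 /\ a <= x + h <= b) (locally 0))
         (locally (F (S j) x))) /\
    (forall j, (j <= k)%nat -> forall x, a <= x <= b ->
       filterlim (F j) (within (fun y => a <= y <= b) (locally x))
         (locally (F j x))).

Definition T1_def (p mu g1 g2 : R) : R :=
  1 / ((p - 1) * mu) *
  ln ((Rpower 2 (1 - p) / mu) /
      (Rpower 2 (1 - p) / mu - Rpower (g1 + g2) (1 - p))).

Definition deriv_vals (f g : R -> R) (L : R) : R -> Prop :=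
  fun m => exists x, Rabs x < L /\ m = Rabs (Derive f x) + Rabs (Derive g x).

From Stdlib Require Import Reals ZArith Lra Lia.
From Coquelicot Require Import Coquelicot.
Open Scope R_scope.

(* Let c = 1 + eps0 and A = 2^{-p} (g1+g2)^p - mu/2 (g1+g2).  Every iterate phi_n, psi_n
   is bounded below by g1, g2 and is nondecreasing along the cone
   |y - x| <= c (t' - t), t <= t'.  Indeed, writing phi_{n+1} by Duhamel's formula along
   the characteristic through (y, t'), the foot point moves by at most (c + 1)(t' - t),
   which costs at most (2 + eps0) M (t' - t) in the data (M bounds |f'| + |g'|), while the
   extra integration time gains at least A (t' - t) >= (2 + eps0) M (t' - t) by (A4), since
   N is nondecreasing above g1 + g2.  Passing to the supremum, finiteness of phi + psi at
   (x, t) forces finiteness at (y, t - |x - y| / c), hence T(x) <= T(y) + |x - y| / c; the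
   iterates stay bounded for short times, so T is finite.  The integrands are Riemann
   integrable because they are monotone along characteristics. *)

Lemma adapted_couple_const (g : R -> R) u v c :
  u <= v -> (forall t, u < t < v -> g t = c) ->
  adapted_couple g u v (u :: v :: nil)%list (c :: nil)%list.
Proof.
  intros Huv Hc; repeat split.
  - intros i Hi; simpl in Hi; destruct i; [simpl; lra | lia].
  - simpl; rewrite Rmin_left; lra.
  - simpl; rewrite Rmax_right; lra.
  - intros i Hi; simpl in Hi; destruct i; [| lia].
    intros t Ht; apply Hc; exact Ht.
Qed.

Lemma StepFun_const (g : R -> R) u v c :
  u <= v -> (forall t, u < t < v -> g t = c) -> IsStepFun g u v.
Proof.
  intros Huv Hc; exists (u :: v :: nil)%list, (c :: nil)%list.
  now apply adapted_couple_const.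
Qed.

Lemma RiemannInt_SF_const (g : R -> R) u v c (pr : IsStepFun g u v) :
  u <= v -> (forall t, u < t < v -> g t = c) ->
  RiemannInt_SF (mkStepFun pr) = c * (v - u).
Proof.
  intros Huv Hc; unfold RiemannInt_SF.
  destruct Rle_dec as [_ |]; [| lra].
  rewrite (StepFun_P17 (StepFun_P1 (mkStepFun pr)) (adapted_couple_const g u v c Huv Hc)).
  simpl; ring.
Qed.

Section UniformGrid.

Variables a h : R.
Hypothesis h_pos : 0 < h.

Definition grid_index (t : R) : Z := Int_part ((t - a) / h).

Lemma grid_index_bounds t :
  a + h * IZR (grid_index t) <= t <= a + h * (IZR (grid_index t) + 1).
Proof.
  destruct (base_Int_part ((t - a) / h)) as [Hlo Hhi]; unfold grid_index.
  assert (E : h * ((t - a) / h) = t - a) by (field; lra).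
  split; nra.
Qed.

Lemma grid_index_spec (k : nat) t :
  a + h * INR k < t < a + h * INR (S k) -> grid_index t = Z.of_nat k.
Proof.
  rewrite S_INR; intros Ht; unfold grid_index, Int_part.
  assert (E : h * ((t - a) / h) = t - a) by (field; lra).
  assert (Hup : (Z.of_nat k + 1)%Z = up ((t - a) / h)).
  { apply tech_up; rewrite plus_IZR, <- INR_IZR_INZ; simpl; nra. }
  rewrite <- Hup; ring.
Qed.

Lemma StepFun_grid (w : Z -> R) (n : nat) :
  IsStepFun (fun t => w (grid_index t)) a (a + h * INR n).
Proof.
  induction n as [| k IH].
  - apply (StepFun_const _ _ _ 0); simpl; intros; lra.
  - apply (StepFun_P46 IH), (StepFun_const _ _ _ (w (Z.of_nat k))).
    + rewrite S_INR; nra.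
    + intros t Ht; now rewrite (grid_index_spec k t Ht).
Qed.

Lemma RiemannInt_SF_grid_increment (w : Z -> R) (n : nat)
  (pr : IsStepFun (fun t => w (grid_index t + 1)%Z - w (grid_index t)) a (a + h * INR n)) :
  RiemannInt_SF (mkStepFun pr) = h * (w (Z.of_nat n) - w 0%Z).
Proof.
  induction n as [| k IH].
  - rewrite (RiemannInt_SF_const _ _ _ 0); simpl; intros; lra.
  - assert (pr1 := StepFun_grid (fun z => w (z + 1)%Z - w z) k).
    assert (Hk : a + h * INR k <= a + h * INR (S k)) by (rewrite S_INR; nra).
    assert (Hpiece : forall t, a + h * INR k < t < a + h * INR (S k) ->
      w (grid_index t + 1)%Z - w (grid_index t) = w (Z.of_nat k + 1)%Z - w (Z.of_nat k)).
    { intros t Ht; now rewrite (grid_index_spec k t Ht). }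
    assert (pr2 := StepFun_const _ _ _ _ Hk Hpiece).
    rewrite <- (StepFun_P43 pr1 pr2 pr), (IH pr1).
    rewrite (RiemannInt_SF_const _ _ _ _ pr2 Hk Hpiece).
    rewrite Nat2Z.inj_succ, <- Z.add_1_r, S_INR; ring.
Qed.

End UniformGrid.

Lemma nondecreasing_grid_approx (F : R -> R) a h n :
  0 < h -> (forall x y, x <= y -> F x <= F y) ->
  { phi : StepFun a (a + h * INR n) & { psi : StepFun a (a + h * INR n) |
    (forall t, Rmin a (a + h * INR n) <= t <= Rmax a (a + h * INR n) ->
       Rabs (F t - phi t) <= psi t) /\
    RiemannInt_SF psi = h * (F (a + h * INR n) - F a) } }.
Proof.
  intros Hh HF.
  set (w := fun k : Z => F (a + h * IZR k)).
  exists (mkStepFun (StepFun_grid a h Hh w n)),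
         (mkStepFun (StepFun_grid a h Hh (fun k => w (k + 1)%Z - w k) n)).
  split.
  - intros t _; simpl; unfold w; rewrite plus_IZR.
    destruct (grid_index_bounds a h Hh t) as [Hlo Hhi].
    pose proof (HF _ _ Hlo); pose proof (HF _ _ Hhi).
    rewrite Rabs_right; lra.
  - rewrite (RiemannInt_SF_grid_increment a h Hh w n); unfold w.
    rewrite <- INR_IZR_INZ; simpl; do 2 f_equal; f_equal; ring.
Qed.

Lemma Riemann_integrable_nondecreasing (F : R -> R) a b :
  a < b -> (forall x y, x <= y -> F x <= F y) -> Riemann_integrable F a b.
Proof.
  intros Hab HF eps.
  assert (Hvar : 0 <= (b - a) * (F b - F a) / eps).
  { pose proof (HF a b) as Hab'; pose proof (cond_pos eps).
    apply Rdiv_le_0_compat; [apply Rmult_le_pos |]; lra. }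
  destruct (nfloor_ex _ Hvar) as [m [_ Hm]].
  set (n := S m); set (h := (b - a) / INR n).
  assert (Hn : 0 < INR n) by (unfold n; rewrite S_INR; pose proof (pos_INR m); lra).
  assert (Hh : 0 < h) by (unfold h; apply Rdiv_lt_0_compat; lra).
  assert (Hb : a + h * INR n = b) by (unfold h; field; lra).
  generalize (nondecreasing_grid_approx F a h n Hh HF); rewrite Hb.
  intros [phi [psi [Happrox Hint]]].
  exists phi, psi; split; [exact Happrox |].
  rewrite Hint, Rabs_right.
  - unfold h; apply (Rmult_lt_reg_r (INR n)); [exact Hn |].
    replace ((b - a) / INR n * (F b - F a) * INR n) with ((b - a) * (F b - F a))
      by (field; lra).
    assert (INR m + 1 = INR n) by (unfold n; rewrite S_INR; lra).
    apply (Rmult_lt_compat_r eps) in Hm; [| apply cond_pos].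
    unfold Rdiv in Hm; rewrite Rmult_assoc, Rinv_l in Hm by (pose proof (cond_pos eps); lra).
    nra.
  - pose proof (HF a b); apply Rle_ge, Rmult_le_pos; lra.
Qed.

Lemma ex_RInt_nondecreasing (F : R -> R) a b :
  a <= b -> (forall x y, a <= x -> x <= y -> y <= b -> F x <= F y) -> ex_RInt F a b.
Proof.
  intros Hab HF; destruct (Req_dec a b) as [<- | Hne]; [apply ex_RInt_point |].
  set (clamp := fun t => Rmin b (Rmax a t)).
  apply (ex_RInt_ext (fun t => F (clamp t))).
  - intros t Ht; rewrite Rmin_left, Rmax_right in Ht by lra.
    unfold clamp; rewrite Rmax_right, Rmin_right by lra; reflexivity.
  - apply ex_RInt_Reals_1, Riemann_integrable_nondecreasing; [lra |].
    intros x y Hxy; unfold clamp; apply HF; unfold Rmin, Rmax;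
      repeat destruct Rle_dec; lra.
Qed.

Lemma Ck_closed_ex_derive k L f :
  (1 <= k)%nat -> Ck_closed k (- L) L f -> forall z, Rabs z < L -> ex_derive f z.
Proof.
  intros Hk [F [HF0 [HF _]]] z Hz; exists (F 1%nat z).
  assert (Hzb : - L <= z <= L) by (apply Rabs_lt_between in Hz; lra).
  apply is_derive_Reals; intros eps Heps.
  destruct (HF 0%nat ltac:(lia) z Hzb _ (locally_ball _ (mkposreal eps Heps))) as [d Hd].
  assert (Hr : 0 < Rmin d (L - Rabs z)) by (apply Rmin_pos; [apply cond_pos | lra]).
  exists (mkposreal _ Hr); intros h Hh0 Hh; change (Rabs h < Rmin d (L - Rabs z)) in Hh.
  pose proof (Rmin_l d (L - Rabs z)); pose proof (Rmin_r d (L - Rabs z)).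
  assert (Hzh : - L <= z + h <= L).
  { apply Rabs_le_between; pose proof (Rabs_triang z h); lra. }
  assert (Hball : ball 0 d h) by (change (Rabs (h - 0) < d); rewrite Rminus_0_r; lra).
  specialize (Hd h Hball (conj Hh0 Hzh)).
  rewrite <- (HF0 _ Hzh), <- (HF0 _ Hzb); exact Hd.
Qed.

Lemma lipschitz_of_Derive_bound (f : R -> R) L M :
  (forall z, Rabs z < L -> ex_derive f z) ->
  (forall z, Rabs z < L -> Rabs (Derive f z) <= M) ->
  forall z1 z2, Rabs z1 < L -> Rabs z2 < L -> Rabs (f z1 - f z2) <= M * Rabs (z1 - z2).
Proof.
  intros Hder HM z1 z2 H1 H2.
  assert (Hin : forall c, Rmin z2 z1 <= c <= Rmax z2 z1 -> Rabs c < L).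
  { apply Rabs_lt_between in H1; apply Rabs_lt_between in H2.
    intros c Hc; apply Rabs_lt_between; unfold Rmin, Rmax in Hc; destruct Rle_dec; lra. }
  destruct (MVT_gen f z2 z1 (Derive f)) as [c [Hc ->]].
  - intros x Hx; apply Derive_correct, Hder, Hin; lra.
  - intros x Hx; apply continuity_pt_filterlim.
    apply (ex_derive_continuous (V := R_NormedModule)), Hder, Hin, Hx.
  - rewrite Rabs_mult; apply Rmult_le_compat_r; [apply Rabs_pos | apply HM, Hin, Hc].
Qed.

Lemma Rdiv_1plus_le a s : 0 <= a -> 0 <= s -> a / (1 + s) <= a.
Proof.
  intros Ha Hs; apply Rmult_le_reg_r with (1 + s); [lra |].
  unfold Rdiv; rewrite Rmult_assoc, Rinv_l by lra; nra.
Qed.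

Section Nonlinearity.

Variables p mu : R.
Hypothesis p_gt1 : 1 < p.
Hypothesis mu_pos : 0 < mu.

Lemma Nl_pos_eq u s :
  0 < u -> Nl p mu u s = Rpower 2 (- p) * Rpower u p - mu / (1 + s) * (u / 2).
Proof.
  intros Hu; unfold Nl, powa; rewrite Rabs_right by lra.
  destruct Rlt_dec; [reflexivity | lra].
Qed.

Lemma Nl_nondecreasing_u gam u v s :
  0 < gam -> mu / 2 <= Rpower 2 (- p) * p * Rpower gam (p - 1) ->
  0 <= s -> gam <= u -> u <= v -> Nl p mu u s <= Nl p mu v s.
Proof.
  intros Hgam Hthr Hs Hu Huv.
  destruct (Req_dec u v) as [<- | Hne]; [lra |].
  rewrite !Nl_pos_eq by lra.
  set (dN := fun w => Rpower 2 (- p) * (p * Rpower w (p - 1)) - mu / (1 + s) * (1 / 2)).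
  destruct (MVT_cor2 (fun w => Rpower 2 (- p) * Rpower w p - mu / (1 + s) * (w / 2)) dN u v)
    as [w [Hmvt Hw]]; [lra | |].
  - intros w Hw; unfold dN.
    pose proof (derivable_pt_lim_power w p ltac:(lra)) as Dpow.
    apply is_derive_Reals in Dpow; apply is_derive_Reals.
    auto_derive; [now exists (p * Rpower w (p - 1)) |].
    rewrite (is_derive_unique _ _ _ Dpow); field; lra.
  - assert (Hgw : Rpower gam (p - 1) <= Rpower w (p - 1)) by (apply Rle_Rpower_l; lra).
    assert (Hc : 0 < Rpower 2 (- p) * p) by (apply Rmult_lt_0_compat; [apply exp_pos | lra]).
    pose proof (Rmult_le_compat_l _ _ _ (Rlt_le _ _ Hc) Hgw).
    pose proof (Rdiv_1plus_le mu s (Rlt_le _ _ mu_pos) Hs).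
    assert (0 <= dN w) by (unfold dN; lra).
    nra.
Qed.

Lemma Nl_nondecreasing_s u s s' :
  0 < u -> 0 <= s -> s <= s' -> Nl p mu u s <= Nl p mu u s'.
Proof.
  intros Hu Hs Hss; rewrite !Nl_pos_eq by lra.
  assert (mu / (1 + s') <= mu / (1 + s))
    by (apply Rmult_le_compat_l; [lra | apply Rinv_le_contravar; lra]).
  nra.
Qed.

Lemma Nl_le_Nl gam u v s s' :
  0 < gam -> mu / 2 <= Rpower 2 (- p) * p * Rpower gam (p - 1) ->
  gam <= u -> u <= v -> 0 <= s -> s <= s' -> Nl p mu u s <= Nl p mu v s'.
Proof.
  intros; apply Rle_trans with (Nl p mu v s).
  - now apply Nl_nondecreasing_u with gam.
  - apply Nl_nondecreasing_s; lra.
Qed.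

Lemma Nl_ge_threshold gam u s :
  0 < gam -> mu / 2 <= Rpower 2 (- p) * p * Rpower gam (p - 1) ->
  gam <= u -> 0 <= s -> Rpower 2 (- p) * Rpower gam p - mu / 2 * gam <= Nl p mu u s.
Proof.
  intros; apply Rle_trans with (Nl p mu gam 0).
  - rewrite Nl_pos_eq, Rplus_0_r by lra; lra.
  - apply Nl_le_Nl with gam; lra.
Qed.

Lemma Nl_le_Rpower u K s :
  0 < u -> u <= K -> 0 <= s -> Nl p mu u s <= Rpower 2 (- p) * Rpower K p.
Proof.
  intros Hu HuK Hs; rewrite Nl_pos_eq by lra.
  assert (Rpower u p <= Rpower K p) by (apply Rle_Rpower_l; lra).
  pose proof (Rmult_le_compat_l (Rpower 2 (- p)) _ _ (Rlt_le _ _ (exp_pos _)) H).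
  assert (0 <= mu / (1 + s)) by (apply Rlt_le, Rdiv_lt_0_compat; lra).
  nra.
Qed.

Lemma Nl_threshold_of_large gam :
  Rpower (mu * p * Rpower 2 p) (1 / (p - 1)) <= gam ->
  mu / 2 <= Rpower 2 (- p) * p * Rpower gam (p - 1).
Proof.
  intros Hgam.
  assert (Hbase : 0 < mu * p * Rpower 2 p) by (apply Rmult_lt_0_compat; [nra | apply exp_pos]).
  assert (Hpow : mu * p * Rpower 2 p <= Rpower gam (p - 1)).
  { replace (mu * p * Rpower 2 p)
      with (Rpower (Rpower (mu * p * Rpower 2 p) (1 / (p - 1))) (p - 1)).
    - apply Rle_Rpower_l; [lra |]; split; [apply exp_pos | exact Hgam].
    - rewrite Rpower_mult; replace (1 / (p - 1) * (p - 1)) with 1 by (field; lra).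
      apply Rpower_1; exact Hbase. }
  assert (Hinv : Rpower 2 (- p) * Rpower 2 p = 1).
  { rewrite <- Rpower_plus, Rplus_opp_l; apply Rpower_O; lra. }
  assert (Hc : 0 < Rpower 2 (- p) * p) by (apply Rmult_lt_0_compat; [apply exp_pos | lra]).
  apply Rle_trans with (Rpower 2 (- p) * p * (mu * p * Rpower 2 p)).
  - replace (Rpower 2 (- p) * p * (mu * p * Rpower 2 p))
      with (mu * (p * p) * (Rpower 2 (- p) * Rpower 2 p)) by ring.
    rewrite Hinv; assert (1 <= p * p) by nra; nra.
  - apply Rmult_le_compat_l; lra.
Qed.

End Nonlinearity.

Lemma RInt_Chasles_shift (F : R -> R) d t :
  ex_RInt F 0 d -> ex_RInt F d (t + d) ->
  RInt F 0 (t + d) = RInt F 0 d + RInt (fun r => F (r + d)) 0 t.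
Proof.
  intros H1 H2.
  assert (E := RInt_comp_lin F 1 d 0 t).
  rewrite Rmult_0_r, Rplus_0_l, Rmult_1_l in E; specialize (E H2).
  rewrite <- (RInt_Chasles F 0 d (t + d) H1 H2), <- E; apply (f_equal (Rplus _)).
  apply RInt_ext; intros r _; rewrite !Rmult_1_l; reflexivity.
Qed.

Definition dep_domain (L x t : R) : Prop := 0 <= t /\ Rabs x + t < L.

Definition cone_le (c x t y t' : R) : Prop := t <= t' /\ Rabs (y - x) <= c * (t' - t).

Definition cone_nondecreasing (L c : R) (u : R -> R -> R) : Prop :=
  forall x t y t', dep_domain L x t -> dep_domain L y t' -> cone_le c x t y t' -> u x t <= u y t'.

Lemma Rabs_m1 : Rabs (-1) = 1.
Proof. rewrite Rabs_left; lra. Qed.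

Section Characteristics.

Variables L c sig : R.
Hypothesis sig_unit : Rabs sig = 1.

Lemma Rabs_sig_mult r : Rabs (sig * r) = Rabs r.
Proof. now rewrite Rabs_mult, sig_unit, Rmult_1_l. Qed.

Lemma dep_domain_characteristic x t s :
  dep_domain L x t -> 0 <= s <= t -> dep_domain L (x + sig * (t - s)) s.
Proof.
  intros [Ht Hx] Hs; split; [lra |].
  pose proof (Rabs_triang x (sig * (t - s))) as Htri.
  rewrite Rabs_sig_mult, (Rabs_right (t - s)) in Htri by lra; lra.
Qed.

Lemma dep_domain_foot x t : dep_domain L x t -> Rabs (x + sig * t) < L.
Proof.
  intros Hd; destruct (dep_domain_characteristic x t 0 Hd) as [_ H]; [destruct Hd; lra |].
  rewrite Rminus_0_r in H; lra.
Qed.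

(* With c >= 1 the characteristics of speed 1 lie inside the cone, so a cone-nondecreasing
   N is nondecreasing along them. *)
Hypothesis c_ge1 : 1 <= c.

Lemma characteristic_nondecreasing (N : R -> R -> R) x t s s' :
  cone_nondecreasing L c N -> dep_domain L x t -> 0 <= s -> s <= s' -> s' <= t ->
  N (x + sig * (t - s)) s <= N (x + sig * (t - s')) s'.
Proof.
  intros HN Hd Hs Hss Hs'; apply HN; try (apply dep_domain_characteristic; [exact Hd | lra]).
  split; [exact Hss |].
  replace (x + sig * (t - s') - (x + sig * (t - s))) with (sig * (s - s')) by ring.
  rewrite Rabs_sig_mult, Rabs_left1 by lra; nra.
Qed.

Lemma ex_RInt_characteristic (N : R -> R -> R) x t a b :
  cone_nondecreasing L c N -> dep_domain L x t -> 0 <= a -> a <= b -> b <= t ->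
  ex_RInt (fun s => N (x + sig * (t - s)) s) a b.
Proof.
  intros HN Hd Ha Hab Hbt; apply ex_RInt_nondecreasing; [exact Hab |].
  intros s s' Hs Hss Hs'; apply characteristic_nondecreasing; auto; lra.
Qed.

Lemma RInt_characteristic_ge (N : R -> R -> R) A x t a b :
  cone_nondecreasing L c N -> (forall z s, dep_domain L z s -> A <= N z s) ->
  dep_domain L x t -> 0 <= a -> a <= b -> b <= t ->
  A * (b - a) <= RInt (fun s => N (x + sig * (t - s)) s) a b.
Proof.
  intros HN HA Hd Ha Hab Hbt.
  assert (E : RInt (fun _ => A) a b = A * (b - a)) by (rewrite RInt_const; apply Rmult_comm).
  rewrite <- E.
  apply RInt_le; auto using ex_RInt_const, ex_RInt_characteristic.
  intros s Hs; apply HA, dep_domain_characteristic; [exact Hd | lra].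
Qed.

Lemma RInt_characteristic_le (N : R -> R -> R) B x t :
  cone_nondecreasing L c N -> (forall z s, dep_domain L z s -> s <= t -> N z s <= B) ->
  dep_domain L x t ->
  RInt (fun s => N (x + sig * (t - s)) s) 0 t <= B * t.
Proof.
  intros HN HB Hd; pose proof Hd as [Ht _].
  assert (E : RInt (fun _ => B) 0 t = B * t)
    by (rewrite RInt_const, Rminus_0_r; apply Rmult_comm).
  rewrite <- E; apply RInt_le; auto using ex_RInt_const, ex_RInt_characteristic with real.
  intros s Hs; apply HB; [apply dep_domain_characteristic; [exact Hd |] |]; lra.
Qed.

Lemma Duhamel_cone_nondecreasing (F : R -> R) (N : R -> R -> R) M A :
  0 <= M -> (c + 1) * M <= A ->
  (forall z1 z2, Rabs z1 < L -> Rabs z2 < L -> Rabs (F z1 - F z2) <= M * Rabs (z1 - z2)) ->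
  (forall z s, dep_domain L z s -> A <= N z s) ->
  cone_nondecreasing L c N ->
  cone_nondecreasing L c
    (fun x t => F (x + sig * t) + RInt (fun s => N (x + sig * (t - s)) s) 0 t).
Proof.
  intros HM HMA HF HA HN x t y t' Hx Hy [Htt Hxy].
  (* Split the integral for (y, t') at d = t' - t: the first piece gains A d, which pays for
     the Lipschitz loss M (c + 1) d of the data; the rest dominates the integral for (x, t)
     pointwise by cone monotonicity of N. *)
  pose proof Hx as [Ht _]; set (d := t' - t).
  assert (Ht' : t' = t + d) by (unfold d; ring).
  set (Ny := fun s => N (y + sig * (t' - s)) s).
  assert (Hsplit : RInt Ny 0 t' = RInt Ny 0 d + RInt (fun r => Ny (r + d)) 0 t).
  { rewrite Ht' at 1; apply RInt_Chasles_shift; apply ex_RInt_characteristic;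
      auto; unfold d; lra. }
  assert (Hnew : A * d <= RInt Ny 0 d).
  { rewrite <- (Rminus_0_r d) at 1; apply RInt_characteristic_ge; auto; unfold d; lra. }
  assert (Hold : RInt (fun s => N (x + sig * (t - s)) s) 0 t <= RInt (fun r => Ny (r + d)) 0 t).
  { apply RInt_le; [exact Ht | apply ex_RInt_characteristic; auto; lra | |].
    - apply ex_RInt_nondecreasing; [exact Ht |]; intros r r' Hr Hrr Hr'.
      apply characteristic_nondecreasing; auto; unfold d; lra.
    - intros r Hr; unfold Ny; replace (t' - (r + d)) with (t - r) by (unfold d; ring).
      apply HN; [apply dep_domain_characteristic; auto; lra | | split].
      + replace (y + sig * (t - r)) with (y + sig * (t' - (r + d))) by (unfold d; ring).
        apply dep_domain_characteristic; auto; unfold d; lra.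
      + lra.
      + replace (y + sig * (t - r) - (x + sig * (t - r))) with (y - x) by ring.
        replace (r + d - r) with (t' - t) by (unfold d; ring); exact Hxy. }
  assert (Hfoot : F (x + sig * t) - M * ((c + 1) * d) <= F (y + sig * t')).
  { pose proof (HF _ _ (dep_domain_foot y t' Hy) (dep_domain_foot x t Hx)) as Hlip.
    assert (Hdist : Rabs (y + sig * t' - (x + sig * t)) <= (c + 1) * d).
    { replace (y + sig * t' - (x + sig * t)) with ((y - x) + sig * d) by (unfold d; ring).
      pose proof (Rabs_triang (y - x) (sig * d)) as Htri.
      rewrite Rabs_sig_mult, (Rabs_right d) in Htri by (unfold d; lra); unfold d in *; lra. }
    apply Rabs_le_between in Hlip.
    pose proof (Rmult_le_compat_l M _ _ HM Hdist); lra. }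
  assert (Hd : 0 <= d) by (unfold d; lra).
  fold Ny; rewrite Hsplit; nra.
Qed.

End Characteristics.

Lemma Sup_seq_bounded_finite (u : nat -> R) a b :
  (forall n, a <= u n <= b) -> exists r, Sup_seq (fun n => Finite (u n)) = Finite r.
Proof.
  intros H.
  assert (Hlo : Rbar_le a (Sup_seq (fun n => Finite (u n))))
    by (apply Sup_seq_minor_le with 0%nat; apply H).
  assert (Hhi : Rbar_le (Sup_seq (fun n => Finite (u n))) b).
  { apply Rbar_not_lt_le; intros [n Hn]%Sup_seq_minor_lt; simpl in Hn; specialize (H n); lra. }
  destruct (Sup_seq _) as [r | |]; simpl in Hlo, Hhi; [now exists r | contradiction | contradiction].
Qed.

Definition lub_finite_time (U : R -> R -> Rbar) (Ts x : R) : Rbar :=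
  Lub_Rbar (fun t => 0 < t < Ts /\ Rbar_lt (U x t) p_infty).

Section LubFiniteTime.

Variables (U : R -> R -> Rbar) (Rs Ts c tau : R).
Hypothesis c_pos : 0 < c.
Hypothesis tau_pos : 0 < tau.
Hypothesis tau_lt : tau < Ts.
Hypothesis U_finite_tau : forall z, Rabs z < Rs -> Rbar_lt (U z tau) p_infty.
Hypothesis U_cone : forall x t y t', Rabs x < Rs -> Rabs y < Rs -> 0 <= t -> t' < Ts ->
  cone_le c x t y t' -> Rbar_le (U x t) (U y t').

Lemma lub_finite_time_ge_tau z :
  Rabs z < Rs -> exists a, lub_finite_time U Ts z = Finite a /\ tau <= a.
Proof.
  intros Hz; unfold lub_finite_time.
  destruct (Lub_Rbar_correct (fun t => 0 < t < Ts /\ Rbar_lt (U z t) p_infty)) as [Hub Hleast].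
  assert (Hlo := Hub tau (conj (conj tau_pos tau_lt) (U_finite_tau z Hz))).
  assert (Hhi : Rbar_le (Lub_Rbar (fun t => 0 < t < Ts /\ Rbar_lt (U z t) p_infty)) Ts)
    by (apply Hleast; intros t [Ht _]; simpl; lra).
  destruct (Lub_Rbar _) as [a | |]; simpl in Hlo, Hhi; try contradiction.
  now exists a.
Qed.

Lemma lub_finite_time_le x y a b :
  Rabs x < Rs -> Rabs y < Rs ->
  lub_finite_time U Ts x = Finite a -> lub_finite_time U Ts y = Finite b -> 0 <= b ->
  a <= b + Rabs (x - y) / c.
Proof.
  intros Hx Hy Ha Hb Hb0; unfold lub_finite_time in Ha, Hb.
  destruct (Lub_Rbar_correct (fun t => 0 < t < Ts /\ Rbar_lt (U x t) p_infty)) as [_ Hleast].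
  destruct (Lub_Rbar_correct (fun t => 0 < t < Ts /\ Rbar_lt (U y t) p_infty)) as [Hub _].
  rewrite Hb in Hub; rewrite Ha in Hleast; apply (Hleast (Finite (b + Rabs (x - y) / c))).
  intros t [Ht Hfin]; simpl.
  set (delay := Rabs (x - y) / c).
  assert (Hdelay : 0 <= delay) by (apply Rdiv_le_0_compat; [apply Rabs_pos | lra]).
  destruct (Rle_lt_dec t delay) as [Hle | Hlt]; [lra |].
  enough (t - delay <= b) by lra.
  apply (Hub (t - delay)); split; [lra |].
  apply (Rbar_le_lt_trans _ (U x t)); [| exact Hfin].
  apply U_cone; try lra; split; [lra |].
  unfold delay; rewrite Rabs_minus_sym; apply Req_le; field; lra.
Qed.

Lemma lub_finite_time_lipschitz x y :
  Rabs x < Rs -> Rabs y < Rs ->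
  Rbar_le (Rbar_abs (Rbar_minus (lub_finite_time U Ts x) (lub_finite_time U Ts y)))
          (Finite (Rabs (x - y) / c)).
Proof.
  intros Hx Hy.
  destruct (lub_finite_time_ge_tau x Hx) as [a [Ha Hta]].
  destruct (lub_finite_time_ge_tau y Hy) as [b [Hb Htb]].
  rewrite Ha, Hb; simpl; apply Rabs_le.
  pose proof (lub_finite_time_le x y a b Hx Hy Ha Hb ltac:(lra)).
  pose proof (lub_finite_time_le y x b a Hy Hx Hb Ha ltac:(lra)) as Hba.
  rewrite Rabs_minus_sym in Hba; lra.
Qed.

End LubFiniteTime.

Lemma lipschitz_ball_le (F : R -> R) L M :
  0 <= M ->
  (forall z1 z2, Rabs z1 < L -> Rabs z2 < L -> Rabs (F z1 - F z2) <= M * Rabs (z1 - z2)) ->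
  forall z, Rabs z < L -> F z <= F 0 + M * L.
Proof.
  intros HM HF z Hz.
  assert (H0 : Rabs 0 < L) by (pose proof (Rabs_pos z); rewrite Rabs_R0; lra).
  pose proof (HF z 0 Hz H0) as Hlip; rewrite Rminus_0_r in Hlip.
  apply Rabs_le_between in Hlip; pose proof (Rmult_le_compat_l M _ _ HM (Rlt_le _ _ Hz)); lra.
Qed.

Section Iterates.

Variables (p mu g1 g2 : R) (f g : R -> R) (L M c : R).
Hypothesis p_gt1 : 1 < p.
Hypothesis mu_pos : 0 < mu.
Hypothesis g1_pos : 0 < g1.
Hypothesis g2_pos : 0 < g2.
Hypothesis Nl_threshold : mu / 2 <= Rpower 2 (- p) * p * Rpower (g1 + g2) (p - 1).
Hypothesis f_ge : forall z, Rabs z < L -> g1 <= f z.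
Hypothesis g_ge : forall z, Rabs z < L -> g2 <= g z.
Hypothesis f_lipschitz :
  forall z1 z2, Rabs z1 < L -> Rabs z2 < L -> Rabs (f z1 - f z2) <= M * Rabs (z1 - z2).
Hypothesis g_lipschitz :
  forall z1 z2, Rabs z1 < L -> Rabs z2 < L -> Rabs (g z1 - g z2) <= M * Rabs (z1 - z2).
Hypothesis M_nonneg : 0 <= M.
Hypothesis c_ge1 : 1 <= c.
Hypothesis M_small :
  (c + 1) * M <= Rpower 2 (- p) * Rpower (g1 + g2) p - mu / 2 * (g1 + g2).

Let phi := phi_n p mu g1 g2 f g.
Let psi := psi_n p mu g1 g2 f g.

Definition N_n (n : nat) (z s : R) : R := Nl p mu (phi n z s + psi n z s) s.

Lemma phi_n_S_characteristic n x t :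
  phi (S n) x t = f (x + 1 * t) + RInt (fun s => N_n n (x + 1 * (t - s)) s) 0 t.
Proof.
  unfold phi, N_n, phi, psi, phi_n, psi_n; simpl.
  destruct (iterates p mu g1 g2 f g n); simpl; rewrite Rmult_1_l; f_equal.
  apply RInt_ext; intros s _; now replace (x + 1 * (t - s)) with (x + t - s) by ring.
Qed.

Lemma psi_n_S_characteristic n x t :
  psi (S n) x t = g (x + -1 * t) + RInt (fun s => N_n n (x + -1 * (t - s)) s) 0 t.
Proof.
  unfold psi, N_n, phi, psi, phi_n, psi_n; simpl.
  destruct (iterates p mu g1 g2 f g n); simpl.
  replace (x + -1 * t) with (x - t) by ring; f_equal.
  apply RInt_ext; intros s _; now replace (x + -1 * (t - s)) with (x - t + s) by ring.
Qed.

Definition iterate_invariant (n : nat) : Prop :=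
  (forall x t, dep_domain L x t -> g1 <= phi n x t /\ g2 <= psi n x t) /\
  cone_nondecreasing L c (phi n) /\ cone_nondecreasing L c (psi n).

Lemma N_n_properties n :
  iterate_invariant n ->
  (forall z s, dep_domain L z s ->
     Rpower 2 (- p) * Rpower (g1 + g2) p - mu / 2 * (g1 + g2) <= N_n n z s) /\
  cone_nondecreasing L c (N_n n).
Proof.
  intros [Hge [Hphi Hpsi]]; split.
  - intros z s Hd; destruct (Hge z s Hd); pose proof Hd as [Hs _].
    apply Nl_ge_threshold; auto; lra.
  - intros x t y t' Hx Hy Hxy; destruct (Hge x t Hx); pose proof Hx as [Ht _].
    pose proof (Hphi x t y t' Hx Hy Hxy); pose proof (Hpsi x t y t' Hx Hy Hxy).
    apply Nl_le_Nl with (g1 + g2); auto; try lra; apply Hxy.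
Qed.

Lemma iterate_invariant_holds n : iterate_invariant n.
Proof.
  assert (HA0 : 0 <= Rpower 2 (- p) * Rpower (g1 + g2) p - mu / 2 * (g1 + g2)) by nra.
  induction n as [| n IH].
  - split; [intros x t _; split | split; intros x t y t' _ _ _]; apply Rle_refl.
  - destruct (N_n_properties n IH) as [HA HN].
    split; [intros x t Hd; pose proof Hd as [Ht _]; split | split].
    + rewrite phi_n_S_characteristic.
      pose proof (RInt_characteristic_ge L c 1 Rabs_R1 c_ge1 (N_n n) _ x t 0 t HN HA Hd).
      pose proof (f_ge _ (dep_domain_foot L 1 Rabs_R1 x t Hd)); nra.
    + rewrite psi_n_S_characteristic.
      pose proof (RInt_characteristic_ge L c (-1) Rabs_m1 c_ge1 (N_n n) _ x t 0 t HN HA Hd).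
      pose proof (g_ge _ (dep_domain_foot L (-1) Rabs_m1 x t Hd)); nra.
    + intros x t y t' Hx Hy Hxy; rewrite !phi_n_S_characteristic.
      exact (Duhamel_cone_nondecreasing L c 1 Rabs_R1 c_ge1 f (N_n n) M _
               M_nonneg M_small f_lipschitz HA HN x t y t' Hx Hy Hxy).
    + intros x t y t' Hx Hy Hxy; rewrite !psi_n_S_characteristic.
      exact (Duhamel_cone_nondecreasing L c (-1) Rabs_m1 c_ge1 g (N_n n) M _
               M_nonneg M_small g_lipschitz HA HN x t y t' Hx Hy Hxy).
Qed.

Lemma iterates_sum_le K tau Bf Bg :
  (forall z, Rabs z < L -> f z <= Bf) -> (forall z, Rabs z < L -> g z <= Bg) ->
  g1 + g2 <= K -> Bf + Bg + 2 * (Rpower 2 (- p) * Rpower K p) * tau <= K ->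
  forall n x t, dep_domain L x t -> t <= tau -> phi n x t + psi n x t <= K.
Proof.
  intros Hf Hg HK Htau n; induction n as [| n IH]; intros x t Hd Ht; [exact HK |].
  set (C := Rpower 2 (- p) * Rpower K p) in Htau |- *.
  destruct (N_n_properties n (iterate_invariant_holds n)) as [_ HN].
  assert (HC : forall z s, dep_domain L z s -> s <= t -> N_n n z s <= C).
  { intros z s Hzs Hs; destruct (proj1 (iterate_invariant_holds n) z s Hzs).
    apply (Nl_le_Rpower p mu p_gt1 mu_pos); [lra | apply IH; [exact Hzs | lra] | apply Hzs]. }
  rewrite phi_n_S_characteristic, psi_n_S_characteristic.
  pose proof (RInt_characteristic_le L c 1 Rabs_R1 c_ge1 (N_n n) C x t HN HC Hd).
  pose proof (RInt_characteristic_le L c (-1) Rabs_m1 c_ge1 (N_n n) C x t HN HC Hd).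
  pose proof (Hf _ (dep_domain_foot L 1 Rabs_R1 x t Hd)).
  pose proof (Hg _ (dep_domain_foot L (-1) Rabs_m1 x t Hd)).
  assert (HC0 : 0 <= C) by (apply Rlt_le, Rmult_lt_0_compat; apply exp_pos).
  pose proof (Rmult_le_compat_l C t tau HC0 Ht); lra.
Qed.

Definition phi_psi_sup (x t : R) : Rbar :=
  Rbar_plus (phi_sup p mu g1 g2 f g x t) (psi_sup p mu g1 g2 f g x t).

Lemma u_sup_cone_nondecreasing x t y t' :
  dep_domain L x t -> dep_domain L y t' -> cone_le c x t y t' ->
  Rbar_le (phi_psi_sup x t) (phi_psi_sup y t').
Proof.
  intros Hx Hy Hxy; apply Rbar_plus_le_compat; apply Sup_seq_le; intros n; simpl;
    destruct (iterate_invariant_holds n) as [_ [Hphi Hpsi]]; auto.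
Qed.

Lemma u_sup_finite K tau Bf Bg x t :
  (forall z, Rabs z < L -> f z <= Bf) -> (forall z, Rabs z < L -> g z <= Bg) ->
  g1 + g2 <= K -> Bf + Bg + 2 * (Rpower 2 (- p) * Rpower K p) * tau <= K ->
  dep_domain L x t -> t <= tau -> Rbar_lt (phi_psi_sup x t) p_infty.
Proof.
  intros Hf Hg HK Htau Hd Ht.
  assert (Hbounds : forall n, g1 <= phi n x t /\ g2 <= psi n x t /\ phi n x t + psi n x t <= K)
    by (intros n; pose proof (proj1 (iterate_invariant_holds n) x t Hd);
        pose proof (iterates_sum_le K tau Bf Bg Hf Hg HK Htau n x t Hd Ht); tauto).
  destruct (Sup_seq_bounded_finite (fun n => phi n x t) g1 (K - g2)) as [r1 E1].
  { intros n; destruct (Hbounds n) as [? [? ?]]; lra. }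
  destruct (Sup_seq_bounded_finite (fun n => psi n x t) g2 (K - g1)) as [r2 E2].
  { intros n; destruct (Hbounds n) as [? [? ?]]; lra. }
  unfold phi_psi_sup, phi_sup, psi_sup; fold phi psi; rewrite E1, E2; exact I.
Qed.

Lemma blowup_time_lipschitz Rs Ts :
  0 < Ts -> Rs + Ts <= L -> forall x y, Rabs x < Rs -> Rabs y < Rs ->
  Rbar_le (Rbar_abs (Rbar_minus (blowup_time p mu g1 g2 f g Ts x)
                                (blowup_time p mu g1 g2 f g Ts y)))
          (Finite (Rabs (x - y) / c)).
Proof.
  intros HTs HL x y Hx Hy.
  assert (HL0 : 0 < L) by (pose proof (Rabs_pos x); lra).
  pose proof (lipschitz_ball_le f L M M_nonneg f_lipschitz) as Hf.
  pose proof (lipschitz_ball_le g L M M_nonneg g_lipschitz) as Hg.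
  assert (H0 : Rabs 0 < L) by (rewrite Rabs_R0; exact HL0).
  pose proof (f_ge 0 H0); pose proof (g_ge 0 H0).
  pose proof (Rmult_le_pos _ _ M_nonneg (Rlt_le _ _ HL0)).
  set (K := f 0 + M * L + (g 0 + M * L) + 2).
  set (C := Rpower 2 (- p) * Rpower K p).
  assert (HC : 0 < C) by (apply Rmult_lt_0_compat; apply exp_pos).
  set (tau := Rmin (Ts / 2) (1 / C)).
  assert (Htau : 0 < tau) by (apply Rmin_pos; [lra | apply Rdiv_lt_0_compat; lra]).
  assert (Htau_Ts : tau < Ts) by (unfold tau; pose proof (Rmin_l (Ts / 2) (1 / C)); lra).
  assert (HCtau : C * tau <= 1).
  { pose proof (Rmult_le_compat_l C _ _ (Rlt_le _ _ HC) (Rmin_r (Ts / 2) (1 / C))) as Hle.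
    replace (C * (1 / C)) with 1 in Hle by (field; lra); exact Hle. }
  apply (lub_finite_time_lipschitz phi_psi_sup Rs Ts c tau); try lra.
  - intros z Hz; apply (u_sup_finite K tau _ _ z tau Hf Hg); [unfold K; lra | | split; lra | lra].
    fold C; unfold K; lra.
  - intros x' t y' t' Hx' Hy' Ht Ht' Hc'; apply u_sup_cone_nondecreasing; auto;
      destruct Hc'; split; lra.
Qed.

End Iterates.

Lemma Derive_le_of_deriv_vals (f g : R -> R) L M :
  is_upper_bound (deriv_vals f g L) M ->
  forall z, Rabs z < L -> Rabs (Derive f z) <= M /\ Rabs (Derive g z) <= M.
Proof.
  intros HM z Hz; pose proof (HM _ (ex_intro _ z (conj Hz eq_refl))).
  pose proof (Rabs_pos (Derive f z)); pose proof (Rabs_pos (Derive g z)); lra.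
Qed.

Theorem theorem3p3
  (p mu Rs Ts g1 g2 eps0 : R) (f g : R -> R)
  (Hp : 1 < p) (Hmu : 0 < mu) (Hpmu : p < 1 + 2 / mu)
  (HRs : 0 < Rs) (HTs : 0 < Ts)
  (Hg1 : 0 < g1) (Hg2 : 0 < g2)
  (Hgsum : Rmax 1 (Rpower (mu * p * Rpower 2 p) (1 / (p - 1))) < g1 + g2)
  (* (A1) *)
  (HA1 : T1_def p mu g1 g2 < Ts)
  (* (A2) *)
  (HA2f : forall x, Rabs x < Rs + Ts -> g1 <= f x)
  (HA2g : forall x, Rabs x < Rs + Ts -> g2 <= g x)
  (* (A3) *)
  (HA3f : Ck_closed 4 (- (Rs + Ts)) (Rs + Ts) f)
  (HA3g : Ck_closed 4 (- (Rs + Ts)) (Rs + Ts) g)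
  (* (A4) *)
  (Heps0 : 0 < eps0)
  (HA4 : exists M, is_lub (deriv_vals f g (Rs + Ts)) M /\
      Rpower 2 (- p) * Rpower (g1 + g2) p - mu / 2 * (g1 + g2) >= (2 + eps0) * M)
  (* (A5) *)
  (HA5 : exists eps1, eps1 <> -1 /\
      Rpower 2 (- p) * (2 * p - 1) * (1 + eps1 / (2 * (1 + eps1))) * (1 - 1 / (2 * p))
        - Rpower 2 (- p + 1) * p - mu > 0 /\
      exists M, is_lub (deriv_vals f g (Rs + Ts)) M /\
      Rpower 2 (- p) * Rpower (g1 + g2) p - mu / 2 * (g1 + g2) >= (2 + eps1) * M) :
  forall x y, Rabs x < Rs -> Rabs y < Rs ->
    Rbar_le
      (Rbar_abs (Rbar_minus (blowup_time p mu g1 g2 f g Ts x)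
                            (blowup_time p mu g1 g2 f g Ts y)))
      (Finite (1 / (1 + eps0) * Rabs (x - y))).
Proof.
  intros x y Hx Hy.
  destruct HA4 as [M [[HMub _] HA]].
  pose proof (Derive_le_of_deriv_vals f g _ M HMub) as HDer.
  assert (HM : 0 <= M)
    by (assert (H0 : Rabs 0 < Rs + Ts) by (rewrite Rabs_R0; lra);
        pose proof (Rabs_pos (Derive f 0)); pose proof (HDer 0 H0); lra).
  pose proof (lipschitz_of_Derive_bound f _ M (Ck_closed_ex_derive 4 _ f ltac:(lia) HA3f)
                (fun z Hz => proj1 (HDer z Hz))) as Hflip.
  pose proof (lipschitz_of_Derive_bound g _ M (Ck_closed_ex_derive 4 _ g ltac:(lia) HA3g)
                (fun z Hz => proj2 (HDer z Hz))) as Hglip.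
  pose proof (Nl_threshold_of_large p mu Hp Hmu (g1 + g2)
                (Rlt_le _ _ (Rle_lt_trans _ _ _ (Rmax_r _ _) Hgsum))) as Hthr.
  replace (1 / (1 + eps0) * Rabs (x - y)) with (Rabs (x - y) / (1 + eps0)) by (field; lra).
  exact (blowup_time_lipschitz p mu g1 g2 f g _ M (1 + eps0) Hp Hmu Hg1 Hg2 Hthr HA2f HA2g
           Hflip Hglip HM ltac:(lra) ltac:(lra) Rs Ts HTs (Rle_refl _) x y Hx Hy).
Qed.
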